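(* Let $S$ and $R'$ be the maps $S:(q_1,p_1,q_2,p_2,t,s)\mapsto\big(q_1+\frac{q_2p_2+\alpha_1}{p_1},p_1,\frac{p_2}{p_1},-q_2p_1,t,\frac{t}{s}\big)$ and $R':(q_1,p_1,q_2,p_2,t,s)\mapsto\big(-\frac{p_1}{p_2},q_1p_2,q_2+\frac{q_1p_1-\alpha_1}{p_2},p_2,\frac{s}{t},s\big)$. Then the composition $R'\circ S$ (first $S$, then $R'$) is $$(q_1,p_1,q_2,p_2,t,s;\alpha_1,\dots,\alpha_6)\mapsto\Big(\frac{1}{q_2},-(q_1p_1+q_2p_2+\alpha_1)q_2,-\frac{q_1}{q_2},-p_1q_2,\frac{1}{s},\frac{t}{s};\alpha_1,\alpha_4,\alpha_2,\alpha_3,\alpha_5,\alpha_6\Big),$$ and this map is a Bäcklund transformation of the Garnier system in two variables: it maps solutions of the Garnier system with parameters $(\alpha_1,\dots,\alpha_6)$ to solutions of the Garnier system with parameters $(\alpha_1,\alpha_4,\alpha_2,\alpha_3,\alpha_5,\alpha_6)$.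
   Context: Parameters $\alpha_1,\dots,\alpha_6\in\mathbb{C}$ with $2\alpha_1+\alpha_2+\dots+\alpha_6=1$. $H_{VI}(q,p,t;a_0,a_1,a_2,a_3,a_4)=\frac{1}{t(t-1)}\big[p^2(q-t)(q-1)q-\{(a_0-1)(q-1)q+a_3(q-t)q+a_4(q-t)(q-1)\}p+a_2(a_1+a_2)(q-t)\big]$. The Garnier system in two variables is $dq_j=\frac{\partial H_1}{\partial p_j}dt+\frac{\partial H_2}{\partial p_j}ds$, $dp_j=-\frac{\partial H_1}{\partial q_j}dt-\frac{\partial H_2}{\partial q_j}ds$ ($j=1,2$) with $H_1=H_{VI}(q_1,p_1,t;\alpha_4+\alpha_6,\alpha_2,\alpha_1,\alpha_5,\alpha_3)+(2\alpha_1+\alpha_2)\frac{q_1q_2p_2}{t(t-1)}+\alpha_3\Big\{\frac{p_1}{t-s}-\frac{(s-1)p_2}{(t-s)(t-1)}\Big\}q_2+\alpha_4\frac{s(p_2-p_1)q_1}{t(t-s)}+\Big\{\frac{2(s-1)p_1p_2}{(t-s)(t-1)}-\frac{tp_1^2+sp_2^2}{t(t-s)}+\frac{(2q_1p_1+q_2p_2)p_2}{t(t-1)}\Big\}q_1q_2$, and $H_2$ obtained from $H_1$ by $q_1\leftrightarrow q_2$, $p_1\leftrightarrow p_2$, $t\leftrightarrow s$, $\alpha_3\leftrightarrow\alpha_4$. *)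

From HB Require Import structures.
From mathcomp Require Import all_boot all_order all_algebra.
From mathcomp Require Import all_classical all_reals all_analysis.
Set Implicit Arguments. Unset Strict Implicit. Unset Printing Implicit Defensive.
Import Order.TTheory GRing.Theory Num.Theory.
Import numFieldNormedType.Exports.
Local Open Scope ring_scope.
Local Open Scope classical_set_scope.

Record phase (K : Type) := Phase {
  c_q1 : K; c_p1 : K; c_q2 : K; c_p2 : K; c_t : K; c_s : K }.

Section Garnier.
Variable K : numClosedFieldType.

Definition HVI (q p t a0 a1 a2 a3 a4 : K) : K :=
  (p ^+ 2 * (q - t) * (q - 1) * q
   - ((a0 - 1) * (q - 1) * q + a3 * (q - t) * q + a4 * (q - t) * (q - 1)) * p
   + a2 * (a1 + a2) * (q - t)) / (t * (t - 1)).

Definition H1 (a1 a2 a3 a4 a5 a6 : K) (q1 p1 q2 p2 t s : K) : K :=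
  HVI q1 p1 t (a4 + a6) a2 a1 a5 a3
  + (2 * a1 + a2) * (q1 * q2 * p2 / (t * (t - 1)))
  + a3 * (p1 / (t - s) - (s - 1) * p2 / ((t - s) * (t - 1))) * q2
  + a4 * (s * (p2 - p1) * q1 / (t * (t - s)))
  + (2 * (s - 1) * p1 * p2 / ((t - s) * (t - 1))
     - (t * p1 ^+ 2 + s * p2 ^+ 2) / (t * (t - s))
     + (2 * q1 * p1 + q2 * p2) * p2 / (t * (t - 1))) * q1 * q2.

Definition H2 (a1 a2 a3 a4 a5 a6 : K) (q1 p1 q2 p2 t s : K) : K :=
  H1 a1 a2 a4 a3 a5 a6 q2 p2 q1 p1 s t.

Definition dq1 (H : K -> K -> K -> K -> K -> K -> K) (q1 p1 q2 p2 t s : K) :=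
  'D_1 (fun y : K => H y p1 q2 p2 t s) q1.
Definition dp1 (H : K -> K -> K -> K -> K -> K -> K) (q1 p1 q2 p2 t s : K) :=
  'D_1 (fun y : K => H q1 y q2 p2 t s) p1.
Definition dq2 (H : K -> K -> K -> K -> K -> K -> K) (q1 p1 q2 p2 t s : K) :=
  'D_1 (fun y : K => H q1 p1 y p2 t s) q2.
Definition dp2 (H : K -> K -> K -> K -> K -> K -> K) (q1 p1 q2 p2 t s : K) :=
  'D_1 (fun y : K => H q1 p1 q2 y t s) p2.

Definition garnier_domain : set (K * K) :=
  [set x | [/\ x.1 != 0, x.1 != 1, x.2 != 0, x.2 != 1 & x.1 != x.2]].

Definition garnier_solution (a1 a2 a3 a4 a5 a6 : K) (U : set (K * K))
    (q1 p1 q2 p2 : K * K -> K) : Prop :=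
  [/\ open U, U `<=` garnier_domain &
   forall x : K * K, U x ->
     let h1 := H1 a1 a2 a3 a4 a5 a6 in
     let h2 := H2 a1 a2 a3 a4 a5 a6 in
     let et : K * K := (1, 0) in
     let es : K * K := (0, 1) in
     let Q1 := q1 x in let P1 := p1 x in let Q2 := q2 x in let P2 := p2 x in
     [/\ [/\ differentiable q1 x, differentiable p1 x,
            differentiable q2 x & differentiable p2 x],
      [/\ 'D_et q1 x = dp1 h1 Q1 P1 Q2 P2 x.1 x.2,
          'D_et p1 x = - dq1 h1 Q1 P1 Q2 P2 x.1 x.2,
          'D_et q2 x = dp2 h1 Q1 P1 Q2 P2 x.1 x.2 &
          'D_et p2 x = - dq2 h1 Q1 P1 Q2 P2 x.1 x.2] &
      [/\ 'D_es q1 x = dp1 h2 Q1 P1 Q2 P2 x.1 x.2,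
          'D_es p1 x = - dq1 h2 Q1 P1 Q2 P2 x.1 x.2,
          'D_es q2 x = dp2 h2 Q1 P1 Q2 P2 x.1 x.2 &
          'D_es p2 x = - dq2 h2 Q1 P1 Q2 P2 x.1 x.2]]].

Definition S_map (a1 : K) (x : phase K) : phase K :=
  let: Phase q1 p1 q2 p2 t s := x in
  Phase (q1 + (q2 * p2 + a1) / p1) p1 (p2 / p1) (- (q2 * p1)) t (t / s).

Definition R'_map (a1 : K) (x : phase K) : phase K :=
  let: Phase q1 p1 q2 p2 t s := x in
  Phase (- (p1 / p2)) (q1 * p2) (q2 + (q1 * p1 - a1) / p2) p2 (s / t) s.

Definition BT (a1 : K) (x : phase K) : phase K :=
  let: Phase q1 p1 q2 p2 t s := x in
  Phase (1 / q2) (- ((q1 * p1 + q2 * p2 + a1) * q2)) (- (q1 / q2))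
        (- (p1 * q2)) (1 / s) (t / s).

(* Old time variables (t,s) expressed through the new ones (T,S) = (1/s, t/s):
   t = S/T, s = 1/T. *)
Definition old_time (y : K * K) : K * K := (y.2 / y.1, 1 / y.1).

Definition BT_sol (a1 : K) (q1 p1 q2 p2 : K * K -> K) (y : K * K) : phase K :=
  let x := old_time y in BT a1 (Phase (q1 x) (p1 x) (q2 x) (p2 x) x.1 x.2).

Definition BT_dom (U : set (K * K)) (q2 : K * K -> K) : set (K * K) :=
  [set y | y.1 != 0 /\ U (old_time y) /\ q2 (old_time y) != 0].

End Garnier.

(* The identity for R' o S is a rational identity.  For the Backlund property,
   the new unknowns are rational functions of the old ones composed with the
   inverse time change t = S/T, s = 1/T of (T, S) = (1/s, t/s).  By the chain
   rule, their derivative along any direction v of the (T, S)-plane is a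
   combination of the old Hamiltonian equations; it equals v.1 times the
   H1-gradient plus v.2 times the H2-gradient of the new system by a rational
   identity, which holds once alpha_6 is eliminated using
   2 alpha_1 + alpha_2 + ... + alpha_6 = 1. *)

From HB Require Import structures.
From mathcomp Require Import all_boot all_order all_algebra.
From mathcomp Require Import all_classical all_reals all_analysis.
From mathcomp Require Import ring.
Import Order.TTheory GRing.Theory Num.Theory.
Import numFieldNormedType.Exports.
Set Implicit Arguments. Unset Strict Implicit. Unset Printing Implicit Defensive.
Local Open Scope ring_scope.
Local Open Scope classical_set_scope.

(* Pointwise forms of the library rules (stated there with [f + g], [f * g]),
   so that [is_derive_rules] below can match them syntactically. *)
Section PointwiseDerivationRules.
Variables (R : numFieldType) (V : normedModType R) (x v : V).
Implicit Types (f g : V -> R) (df dg : R).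

Lemma is_derive_add f g df dg : is_derive x v f df -> is_derive x v g dg ->
  is_derive x v (fun y => f y + g y) (df + dg).
Proof. exact: is_deriveD. Qed.

Lemma is_derive_opp f df : is_derive x v f df ->
  is_derive x v (fun y => - f y) (- df).
Proof. exact: is_deriveN. Qed.

Lemma is_derive_mul f g df dg : is_derive x v f df -> is_derive x v g dg ->
  is_derive x v (fun y => f y * g y) (f x * dg + g x * df).
Proof. exact: is_deriveM. Qed.

Lemma is_derive_sqr f df : is_derive x v f df ->
  is_derive x v (fun y => f y ^+ 2) (2 * f x * df).
Proof.
move=> fdf; apply: is_derive_eq (is_deriveX 2 fdf) _.
by rewrite expr1.
Qed.

Lemma is_derive_inv f df : f x != 0 -> is_derive x v f df ->
  is_derive x v (fun y => (f y)^-1) (- df / f x ^+ 2).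
Proof.
move=> fx0 [fdf <-]; apply: DeriveDef; first exact: derivableV.
by rewrite deriveV // [_ *: _]mulrC mulrN mulNr.
Qed.

End PointwiseDerivationRules.

Lemma derive_val_eq (R : numFieldType) (V W : normedModType R) (f : V -> W) (x v : V)
    (df df' : W) :
  is_derive x v f df -> df = df' -> 'D_v f x = df'.
Proof. by move=> [_ ->]. Qed.

Section Projections.
Variables (R : numFieldType) (U W : normedModType R).

Lemma differentiable_fst (x : U * W) : differentiable fst x.
Proof. by apply: linear_differentiable => y; apply: cvg_fst. Qed.

Lemma differentiable_snd (x : U * W) : differentiable snd x.
Proof. by apply: linear_differentiable => y; apply: cvg_snd. Qed.

Lemma is_derive_fst (x v : U * W) : is_derive x v fst v.1.
Proof.
apply: DeriveDef; first exact/diff_derivable/differentiable_fst.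
by rewrite deriveE ?diff_lin //; [move=> y; apply: cvg_fst | apply: differentiable_fst].
Qed.

Lemma is_derive_snd (x v : U * W) : is_derive x v snd v.2.
Proof.
apply: DeriveDef; first exact/diff_derivable/differentiable_snd.
by rewrite deriveE ?diff_lin //; [move=> y; apply: cvg_snd | apply: differentiable_snd].
Qed.

End Projections.

(* [eapply] rather than [apply:]: [is_derive] is a type class, and [apply:] would
   let instance resolution produce the library's [*:]-shaped derivatives. *)
Ltac is_derive_rules := lazymatch goal with
  | |- is_derive _ _ (fun _ => ?c) _ => eapply is_derive_cst
  | |- is_derive _ _ (fun y => y) _ => eapply is_derive_id
  | |- is_derive _ _ (fun y => @?f y + @?g y) _ =>
      eapply (is_derive_add (f := f) (g := g)); [is_derive_rules | is_derive_rules]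
  | |- is_derive _ _ (fun y => - @?f y) _ => eapply (is_derive_opp (f := f)); is_derive_rules
  | |- is_derive _ _ (fun y => @?f y * @?g y) _ =>
      eapply (is_derive_mul (f := f) (g := g)); [is_derive_rules | is_derive_rules]
  | |- is_derive _ _ (fun y => @?f y ^+ 2) _ => eapply (is_derive_sqr (f := f)); is_derive_rules
  | |- is_derive _ _ (fun y => (@?f y)^-1) _ =>
      eapply (is_derive_inv (f := f)); [assumption | is_derive_rules]
  | |- is_derive _ _ (fun y => y.1) _ => eapply is_derive_fst
  | |- is_derive _ _ (fun y => y.2) _ => eapply is_derive_snd
  | |- _ => eassumption
  end.

Section ChainRule.
Variables (R : numFieldType) (V : normedModType R).

Lemma diff_coordE (f : R * R -> R) (x c : R * R) : differentiable f x ->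
  'd f x c = c.1 * 'D_(1, 0) f x + c.2 * 'D_(0, 1) f x.
Proof.
move=> df; rewrite !deriveE //.
rewrite {1}(_ : c = c.1 *: ((1, 0) : R * R) + c.2 *: (0, 1)); last first.
  by case: c => c1 c2; congr pair; rewrite /= ?scaler0 ?addr0 ?add0r [_%:A]mulr1.
by rewrite linearD !linearZ.
Qed.

Lemma is_derive_comp_pair (g h : V -> R) (f : R * R -> R) (x v : V) dg dh :
  differentiable g x -> differentiable h x -> differentiable f (g x, h x) ->
  is_derive x v g dg -> is_derive x v h dh ->
  is_derive x v (fun y => f (g y, h y))
    (dg * 'D_(1, 0) f (g x, h x) + dh * 'D_(0, 1) f (g x, h x)).
Proof.
move=> gx hx fx [_ <-] [_ <-].
have gh := differentiable_pair gx hx.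
have fgh : differentiable (f \o (fun y => (g y, h y))) x := differentiable_comp gh fx.
apply: DeriveDef; first exact: diff_derivable fgh.
rewrite (deriveE _ fgh) (diff_comp gh fx) /= (diff_pair gx hx) /=.
by rewrite diff_coordE // (deriveE _ gx) (deriveE _ hx).
Qed.

End ChainRule.

Section HamiltonianPartials.
Variable K : numClosedFieldType.

(* The partial derivatives of H1; denominators are kept in the shape they have
   in H1, so that [ring] checks these formulas with inverses as atoms. *)
Definition H1_q1 (a1 a2 a3 a4 a5 a6 q1 p1 q2 p2 t s : K) : K :=
  (p1 ^+ 2 * ((q1 - 1) * q1 + (q1 - t) * q1 + (q1 - t) * (q1 - 1))
   - ((a4 + a6 - 1) * (2 * q1 - 1) + a5 * (2 * q1 - t) + a3 * (2 * q1 - t - 1)) * p1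
   + a1 * (a2 + a1)) / (t * (t - 1))
  + (2 * a1 + a2) * q2 * p2 / (t * (t - 1)) + a4 * s * (p2 - p1) / (t * (t - s))
  + (2 * (s - 1) * p1 * p2 / ((t - s) * (t - 1)) - (t * p1 ^+ 2 + s * p2 ^+ 2) / (t * (t - s))
     + (4 * q1 * p1 + q2 * p2) * p2 / (t * (t - 1))) * q2.

Definition H1_p1 (a1 a2 a3 a4 a5 a6 q1 p1 q2 p2 t s : K) : K :=
  (2 * p1 * (q1 - t) * (q1 - 1) * q1
   - ((a4 + a6 - 1) * (q1 - 1) * q1 + a5 * (q1 - t) * q1 + a3 * (q1 - t) * (q1 - 1)))
   / (t * (t - 1))
  + a3 * q2 / (t - s) - a4 * s * q1 / (t * (t - s))
  + (2 * (s - 1) * p2 / ((t - s) * (t - 1)) - 2 * t * p1 / (t * (t - s))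
     + 2 * q1 * p2 / (t * (t - 1))) * q1 * q2.

Definition H1_q2 (a1 a2 a3 a4 a5 a6 q1 p1 q2 p2 t s : K) : K :=
  (2 * a1 + a2) * q1 * p2 / (t * (t - 1))
  + a3 * (p1 / (t - s) - (s - 1) * p2 / ((t - s) * (t - 1)))
  + (2 * (s - 1) * p1 * p2 / ((t - s) * (t - 1)) - (t * p1 ^+ 2 + s * p2 ^+ 2) / (t * (t - s))
     + (2 * q1 * p1 + 2 * q2 * p2) * p2 / (t * (t - 1))) * q1.

Definition H1_p2 (a1 a2 a3 a4 a5 a6 q1 p1 q2 p2 t s : K) : K :=
  (2 * a1 + a2) * q1 * q2 / (t * (t - 1)) - a3 * (s - 1) * q2 / ((t - s) * (t - 1))
  + a4 * s * q1 / (t * (t - s))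
  + (2 * (s - 1) * p1 / ((t - s) * (t - 1)) - 2 * s * p2 / (t * (t - s))
     + 2 * (q1 * p1 + q2 * p2) / (t * (t - 1))) * q1 * q2.

Lemma dq1_H1 (a1 a2 a3 a4 a5 a6 q1 p1 q2 p2 t s : K) :
  dq1 (H1 a1 a2 a3 a4 a5 a6) q1 p1 q2 p2 t s =
  H1_q1 a1 a2 a3 a4 a5 a6 q1 p1 q2 p2 t s.
Proof.
rewrite /dq1 /H1 /HVI; eapply derive_val_eq; first by is_derive_rules.
by rewrite /H1_q1; ring.
Qed.

Lemma dp1_H1 (a1 a2 a3 a4 a5 a6 q1 p1 q2 p2 t s : K) :
  dp1 (H1 a1 a2 a3 a4 a5 a6) q1 p1 q2 p2 t s =
  H1_p1 a1 a2 a3 a4 a5 a6 q1 p1 q2 p2 t s.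
Proof.
rewrite /dp1 /H1 /HVI; eapply derive_val_eq; first by is_derive_rules.
by rewrite /H1_p1; ring.
Qed.

Lemma dq2_H1 (a1 a2 a3 a4 a5 a6 q1 p1 q2 p2 t s : K) :
  dq2 (H1 a1 a2 a3 a4 a5 a6) q1 p1 q2 p2 t s =
  H1_q2 a1 a2 a3 a4 a5 a6 q1 p1 q2 p2 t s.
Proof.
rewrite /dq2 /H1 /HVI; eapply derive_val_eq; first by is_derive_rules.
by rewrite /H1_q2; ring.
Qed.

Lemma dp2_H1 (a1 a2 a3 a4 a5 a6 q1 p1 q2 p2 t s : K) :
  dp2 (H1 a1 a2 a3 a4 a5 a6) q1 p1 q2 p2 t s =
  H1_p2 a1 a2 a3 a4 a5 a6 q1 p1 q2 p2 t s.
Proof.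
rewrite /dp2 /H1 /HVI; eapply derive_val_eq; first by is_derive_rules.
by rewrite /H1_p2; ring.
Qed.


Lemma dq1_H2 (a1 a2 a3 a4 a5 a6 q1 p1 q2 p2 t s : K) :
  dq1 (H2 a1 a2 a3 a4 a5 a6) q1 p1 q2 p2 t s = H1_q2 a1 a2 a4 a3 a5 a6 q2 p2 q1 p1 s t.
Proof. exact: dq2_H1. Qed.

Lemma dp1_H2 (a1 a2 a3 a4 a5 a6 q1 p1 q2 p2 t s : K) :
  dp1 (H2 a1 a2 a3 a4 a5 a6) q1 p1 q2 p2 t s = H1_p2 a1 a2 a4 a3 a5 a6 q2 p2 q1 p1 s t.
Proof. exact: dp2_H1. Qed.

Lemma dq2_H2 (a1 a2 a3 a4 a5 a6 q1 p1 q2 p2 t s : K) :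
  dq2 (H2 a1 a2 a3 a4 a5 a6) q1 p1 q2 p2 t s = H1_q1 a1 a2 a4 a3 a5 a6 q2 p2 q1 p1 s t.
Proof. exact: dq1_H1. Qed.

Lemma dp2_H2 (a1 a2 a3 a4 a5 a6 q1 p1 q2 p2 t s : K) :
  dp2 (H2 a1 a2 a3 a4 a5 a6) q1 p1 q2 p2 t s = H1_p1 a1 a2 a4 a3 a5 a6 q2 p2 q1 p1 s t.
Proof. exact: dp1_H1. Qed.

End HamiltonianPartials.

Ltac differentiable_rules := lazymatch goal with
  | |- differentiable (fun _ => ?c) _ => apply: differentiable_cst
  | |- differentiable (fun y => y.1) _ => apply: differentiable_fst
  | |- differentiable (fun y => y.2) _ => apply: differentiable_snd
  | |- differentiable (fun y => @?f y + @?g y) _ =>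
      apply: (differentiableD (f := f) (g := g)); [differentiable_rules | differentiable_rules]
  | |- differentiable (fun y => - @?f y) _ => apply: (differentiableN (f := f)); differentiable_rules
  | |- differentiable (fun y => @?f y * @?g y) _ =>
      apply: (differentiableM (f := f) (g := g)); [differentiable_rules | differentiable_rules]
  | |- differentiable (fun y => (@?f y)^-1) _ =>
      apply: (differentiableV (f := f)); [differentiable_rules | assumption]
  | |- _ => eassumption
  end.

Section TimeChange.
Variable K : numClosedFieldType.

Lemma differentiable_old_time (y : K * K) : y.1 != 0 -> differentiable (@old_time K) y.
Proof. by move=> y1; apply: differentiable_pair; differentiable_rules. Qed.

Lemma is_derive_comp_old_time (f : K * K -> K) (y v : K * K) ft fs :
  y.1 != 0 -> differentiable f (old_time y) ->
  'D_(1, 0) f (old_time y) = ft -> 'D_(0, 1) f (old_time y) = fs ->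
  is_derive y v (fun z => f (old_time z))
    ((y.1 * v.2 - y.2 * v.1) / y.1 ^+ 2 * ft - v.1 / y.1 ^+ 2 * fs).
Proof.
move=> y1 fy <- <-; eapply is_derive_eq.
  apply: is_derive_comp_pair => //.
  - by differentiable_rules.
  - by differentiable_rules.
  - by is_derive_rules.
  - by is_derive_rules.
by rewrite /=; field.
Qed.

End TimeChange.

Section Domains.
Variable K : numClosedFieldType.

Lemma BT_sol_time a1 (q1 p1 q2 p2 : K * K -> K) (y : K * K) : y.1 != 0 ->
  (c_t (BT_sol a1 q1 p1 q2 p2 y), c_s (BT_sol a1 q1 p1 q2 p2 y)) = y.
Proof. by case: y => T S /= T0; congr pair; rewrite /old_time /=; field. Qed.

Lemma garnier_domain_old_time (y : K * K) :
  y.1 != 0 -> garnier_domain (old_time y) -> garnier_domain y.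
Proof.
case: y => T S /= T0; rewrite /garnier_domain /old_time /=.
case=> t0 t1 s0 s1 ts; split => //.
- by apply: contra s1 => /eqP ->; rewrite divr1.
- by apply: contra t0 => /eqP ->; rewrite mul0r.
- by apply: contra ts => /eqP ->.
- by apply: contra t1 => /eqP <-; rewrite divff.
Qed.

Lemma open_BT_dom (U : set (K * K)) (q2 : K * K -> K) :
  open U -> (forall x, U x -> {for x, continuous q2}) -> open (BT_dom U q2).
Proof.
move=> oU q2c; rewrite openE => y [y1 [Ux qx]].
have ot := differentiable_continuous (differentiable_old_time y1).
have nearT : \forall z \near y, z.1 != 0.
  exact: cvgr_neq0 (differentiable_continuous (differentiable_fst y)) y1.
have nearU : \forall z \near y, U (old_time z).
  by apply: ot; apply: open_nbhs_nbhs.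
have nearQ : \forall z \near y, q2 (old_time z) != 0.
  exact: cvgr_neq0 (continuous_comp ot (q2c _ Ux)) qx.
by near=> z; do !split; near: z.
Unshelve. all: by end_near.
Qed.

End Domains.

Section BacklundTransformation.
Variables (K : numClosedFieldType) (a1 a2 a3 a4 a5 a6 : K).
Hypothesis alpha_sum : 2 * a1 + a2 + a3 + a4 + a5 + a6 = 1.
Variables (U : set (K * K)) (q1 p1 q2 p2 : K * K -> K).
Hypothesis sol : garnier_solution a1 a2 a3 a4 a5 a6 U q1 p1 q2 p2.

Local Notation nq1 := (fun y => c_q1 (BT_sol a1 q1 p1 q2 p2 y)).
Local Notation np1 := (fun y => c_p1 (BT_sol a1 q1 p1 q2 p2 y)).
Local Notation nq2 := (fun y => c_q2 (BT_sol a1 q1 p1 q2 p2 y)).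
Local Notation np2 := (fun y => c_p2 (BT_sol a1 q1 p1 q2 p2 y)).

Lemma BT_sol_total_derive (y v : K * K) : BT_dom U q2 y ->
  let h1 := H1 a1 a4 a2 a3 a5 a6 in let h2 := H2 a1 a4 a2 a3 a5 a6 in
  let Q1 := nq1 y in let P1 := np1 y in let Q2 := nq2 y in let P2 := np2 y in
  [/\ 'D_v nq1 y = v.1 * dp1 h1 Q1 P1 Q2 P2 y.1 y.2 + v.2 * dp1 h2 Q1 P1 Q2 P2 y.1 y.2,
      'D_v np1 y = - (v.1 * dq1 h1 Q1 P1 Q2 P2 y.1 y.2 + v.2 * dq1 h2 Q1 P1 Q2 P2 y.1 y.2),
      'D_v nq2 y = v.1 * dp2 h1 Q1 P1 Q2 P2 y.1 y.2 + v.2 * dp2 h2 Q1 P1 Q2 P2 y.1 y.2 &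
      'D_v np2 y = - (v.1 * dq2 h1 Q1 P1 Q2 P2 y.1 y.2 + v.2 * dq2 h2 Q1 P1 Q2 P2 y.1 y.2)].
Proof.
have a6E : a6 = 1 - (2 * a1 + a2 + a3 + a4 + a5).
  by apply: (addrI (2 * a1 + a2 + a3 + a4 + a5)); rewrite alpha_sum addrC subrK.
case: y => T S [/= T0 [Ux qx]]; have [_ sub eqs] := sol.
have [_ T1 S0 S1 TS] := garnier_domain_old_time (y := (T, S)) T0 (sub _ Ux).
have [[d1 d2 d3 d4] [e1 e2 e3 e4] [f1 f2 f3 f4]] := eqs _ Ux.
have Dq1 := is_derive_comp_old_time (y := (T, S)) v T0 d1 e1 f1.
have Dp1 := is_derive_comp_old_time (y := (T, S)) v T0 d2 e2 f2.
have Dq2 := is_derive_comp_old_time (y := (T, S)) v T0 d3 e3 f3.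
have Dp2 := is_derive_comp_old_time (y := (T, S)) v T0 d4 e4 f4.
rewrite !(dq1_H1, dp1_H1, dq2_H1, dp2_H1, dq1_H2, dp1_H2, dq2_H2, dp2_H2) in Dq1 Dp1 Dq2 Dp2.
rewrite /BT_sol /BT /= !(dq1_H1, dp1_H1, dq2_H1, dp2_H1, dq1_H2, dp1_H2, dq2_H2, dp2_H2).
split; eapply (derive_val_eq (W := K)); try by is_derive_rules.
all: rewrite /H1_q1 /H1_p1 /H1_q2 /H1_p2 /old_time /= a6E.
all: by field; rewrite ?mulN1r ?subr_eq0; repeat (apply/andP; split); by [|rewrite eq_sym].
Qed.

Lemma BT_sol_differentiable (y : K * K) : BT_dom U q2 y ->
  [/\ differentiable nq1 y, differentiable np1 y, differentiable nq2 y & differentiable np2 y].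
Proof.
case=> y1 [Ux qx]; have [_ _ eqs] := sol.
have [[d1 d2 d3 d4] _ _] := eqs _ Ux.
have ot := differentiable_old_time y1.
have c1 : differentiable (fun z => q1 (old_time z)) y := differentiable_comp ot d1.
have c2 : differentiable (fun z => p1 (old_time z)) y := differentiable_comp ot d2.
have c3 : differentiable (fun z => q2 (old_time z)) y := differentiable_comp ot d3.
have c4 : differentiable (fun z => p2 (old_time z)) y := differentiable_comp ot d4.
by rewrite /BT_sol /BT /=; split; differentiable_rules.
Qed.

End BacklundTransformation.

Lemma R'_map_comp_S_map (K : numClosedFieldType) (a1 : K) (x : phase K) :
  c_p1 x != 0 -> c_q2 x != 0 -> c_t x != 0 -> c_s x != 0 ->
  R'_map a1 (S_map a1 x) = BT a1 x.
Proof.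
case: x => q1 p1 q2 p2 t s /= p1n0 q2n0 t0 s0.
by congr Phase; field; rewrite ?p1n0 ?q2n0 ?t0 ?s0.
Qed.

Theorem mainTheorem4 (K : numClosedFieldType) (a1 a2 a3 a4 a5 a6 : K) :
  2 * a1 + a2 + a3 + a4 + a5 + a6 = 1 ->
  (forall x : phase K,
     c_p1 x != 0 -> c_q2 x != 0 -> c_t x != 0 -> c_s x != 0 ->
     R'_map a1 (S_map a1 x) = BT a1 x) /\
  (forall (U : set (K * K)) (q1 p1 q2 p2 : K * K -> K),
     garnier_solution a1 a2 a3 a4 a5 a6 U q1 p1 q2 p2 ->
     (forall y, BT_dom U q2 y ->
        (c_t (BT_sol a1 q1 p1 q2 p2 y), c_s (BT_sol a1 q1 p1 q2 p2 y)) = y) /\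
     garnier_solution a1 a4 a2 a3 a5 a6 (BT_dom U q2)
       (fun y => c_q1 (BT_sol a1 q1 p1 q2 p2 y))
       (fun y => c_p1 (BT_sol a1 q1 p1 q2 p2 y))
       (fun y => c_q2 (BT_sol a1 q1 p1 q2 p2 y))
       (fun y => c_p2 (BT_sol a1 q1 p1 q2 p2 y))).
Proof.
move=> alpha_sum; split=> [|U q1 p1 q2 p2 sol]; first exact: R'_map_comp_S_map.
split=> [y [y1 _]|]; first exact: BT_sol_time.
have [oU sub eqs] := sol; split.
- apply: open_BT_dom => // x Ux; have [[_ _ d _] _ _] := eqs x Ux.
  exact: differentiable_continuous.
- by move=> y [y1 [Ux _]]; apply: garnier_domain_old_time y1 (sub _ Ux).
- move=> y hy; have D v := BT_sol_total_derive alpha_sum sol v hy.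
  have [dt1 dt2 dt3 dt4] := D (1, 0); have [ds1 ds2 ds3 ds4] := D (0, 1).
  rewrite !(mul1r, mul0r, addr0, add0r) in dt1 dt2 dt3 dt4 ds1 ds2 ds3 ds4.
  by split; [exact: (BT_sol_differentiable sol hy) | split | split].
Qed.
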